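(* Assume $N,L\to\infty$ with $N/L\to0$, $d=d(L)\to0$, $dL\to\infty$ and $N/(dL)\to\gamma\in[0,\infty)$. Then for every $n\in\mathbb N$, $$\lim\ \pi_{L,N}[\tilde\eta_1=n]=\frac{\gamma^{n-1}}{(1+\gamma)^n},$$ i.e. the law of $\tilde\eta_1$ under $\pi_{L,N}$ converges to the geometric distribution on $\{1,2,\dots\}$ with success parameter $\frac1{1+\gamma}$ (for $\gamma=0$, the point mass at $1$).
   Context: Inclusion process: $\Omega_{L,N}=\{\eta\in\mathbb N_0^L:\sum_x\eta_x=N\}$, generator $\mathfrak L_{L,N}f(\eta)=\sum_{x\ne y}\eta_x(d+\eta_y)[f(\eta^{x,y})-f(\eta)]$, $\eta^{x,y}=\eta-e^x+e^y$. For $d>0$ its unique invariant distribution is $\pi_{L,N}[\eta]=\frac1{Z_{L,N}}\prod_{x=1}^Lw_L(\eta_x)$ with $w_L(n)=\frac{\Gamma(n+d)}{n!\,\Gamma(d)}$ and $Z_{L,N}=\frac{\Gamma(N+dL)}{N!\,\Gamma(dL)}$. Size-biased marginal: given $\eta$, choose a site $x$ with probability $\eta_x/N$ and set $\tilde\eta_1=\eta_x$; $\pi_{L,N}[\tilde\eta_1=n]$ denotes the probability of this event when $\eta\sim\pi_{L,N}$, i.e. $\pi_{L,N}[\tilde\eta_1=n]=\frac LNn\,w_L(n)\frac{Z_{L-1,N-n}}{Z_{L,N}}$. *)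

From HB Require Import structures.
From mathcomp Require Import all_boot all_order all_algebra.
From mathcomp Require Import all_classical all_reals all_analysis.
Set Implicit Arguments. Unset Strict Implicit. Unset Printing Implicit Defensive.
Import Order.TTheory GRing.Theory Num.Theory.
Local Open Scope ring_scope.

(* rising factorial: x (x+1) ... (x+n-1) = Gamma(x+n)/Gamma(x) for x > 0 *)
Definition rising {R : realType} (x : R) (n : nat) : R :=
  \prod_(i < n) (x + i%:R).

(* w_L(n) = Gamma(n+d) / (n! Gamma(d)) *)
Definition wIP {R : realType} (d : R) (n : nat) : R := rising d n / (n`!)%:R.

(* Z_{L,N} = Gamma(N + dL) / (N! Gamma(dL)) *)
Definition ZIP {R : realType} (d : R) (L N : nat) : R :=
  rising (d * L%:R) N / (N`!)%:R.

(* pi_{L,N}[tilde eta_1 = n] = (L/N) n w_L(n) Z_{L-1,N-n} / Z_{L,N}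
   (this probability is 0 when n > N) *)
Definition sbIP {R : realType} (d : R) (L N n : nat) : R :=
  if (n <= N)%N then
    (L%:R / N%:R) * n%:R * wIP d n * ZIP d (L.-1) (N - n) / ZIP d L N
  else 0.

From HB Require Import structures.
From mathcomp Require Import all_boot all_order all_algebra.
From mathcomp Require Import all_classical all_reals all_analysis.
From mathcomp Require Import ring lra.
Import Order.TTheory GRing.Theory Num.Theory.
Import numFieldNormedType.Exports.
Local Open Scope classical_set_scope.
Local Open Scope ring_scope.

(* Write D = dL and N = M + (n+1).  Expressing Gamma-ratios as rising factorials,
   the probability pi_{L,N}[tilde eta_1 = n+1] factors exactly (sbIP_factor) as
       D/(D+N-1) * rising(d+1,n)/n! * prod_{i<M} (1 - d/(D+i))
                 * prod_{i<n} (M+i+1)/(D+M+i).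
   Along the scaling limit each factor converges separately:
   - the first factor and each of the n factors of the last product are ratios of
     affine expressions in D and M with M/D -> gamma, hence tend to 1/(1+gamma)
     and gamma/(1+gamma) (cvg_affine_ratio);
   - rising(d+1,n)/n! -> rising(1,n)/n! = 1 since d -> 0 (cvg_rising_fact);
   - the middle product is squeezed between 1 - M/L and 1, and M/L <= N/L -> 0
     (shift_product_bounds, cvg_shift_product). *)

Section RisingFactorial.
Variable R : realType.
Implicit Types (x y : R) (m n : nat).

Lemma rising_add x m n : rising x (m + n) = rising x m * rising (x + m%:R) n.
Proof.
rewrite /rising big_split_ord /=; congr (_ * _).
by apply: eq_bigr => i _; rewrite natrD addrA.
Qed.

Lemma risingS x n : rising x n.+1 = x * rising (x + 1) n.
Proof. by rewrite -add1n rising_add /rising big_ord1 addr0. Qed.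

Lemma risingSr x n : rising x n.+1 = rising x n * (x + n%:R).
Proof. by rewrite -addn1 rising_add /rising big_ord1 addr0. Qed.

Lemma rising1 n : rising (1 : R) n = (n`!)%:R.
Proof.
elim: n => [|n IH]; first by rewrite /rising big_ord0.
by rewrite risingSr IH factS natrM mulrC -natr1 addrC.
Qed.

Lemma rising_gt0 x n : 0 < x -> 0 < rising x n.
Proof. by move=> x0; apply: prodr_gt0 => i _; rewrite ltr_wpDr. Qed.

Lemma fact_add m n : ((m + n)`!)%:R = (m`!)%:R * rising (m%:R + 1) n :> R.
Proof. by rewrite -!rising1 rising_add addrC. Qed.

Lemma rising_sub x y m : 0 < x ->
  rising (x - y) m = rising x m * \prod_(i < m) (1 - y / (x + i%:R)).
Proof.
move=> x0; rewrite /rising -big_split /=; apply: eq_bigr => i _.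
have xi0 : x + i%:R != 0 by rewrite gt_eqF // ltr_wpDr.
by field.
Qed.

End RisingFactorial.

Lemma sbIP_factor (R : realType) (d : R) (L M n : nat) : 0 < d -> (0 < L)%N ->
  sbIP d L (M + n.+1) n.+1 =
    d * L%:R / (d * L%:R + M%:R + n%:R) * (rising (d + 1) n / (n`!)%:R)
    * \prod_(i < M) (1 - d / (d * L%:R + i%:R))
    * \prod_(i < n) ((M%:R + (i%:R + 1)) / (d * L%:R + M%:R + i%:R)).
Proof.
move=> d0 L0.
have D0 : 0 < d * L%:R by rewrite mulr_gt0 // ltr0n.
have -> : \prod_(i < n) ((M%:R + (i%:R + 1)) / (d * L%:R + M%:R + i%:R))
    = rising (M%:R + 1) n / rising (d * L%:R + M%:R) n.
  by rewrite prodf_div /rising; congr (_ / _); apply: eq_bigr => i _; ring.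
rewrite /sbIP leq_addl addnK /wIP /ZIP.
have -> : d * (L.-1)%:R = d * L%:R - d by rewrite -subn1 natrB // mulrBr mulr1.
rewrite rising_sub // rising_add fact_add (risingS _ d) factS natrM !risingSr.
have M0 : (0 : R) <= M%:R by [].
have n0 : (0 : R) <= n%:R by [].
have pos := rising_gt0.
have f0 : forall k, (0 : R) < (k`!)%:R by move=> k; rewrite ltr0n fact_gt0.
rewrite !natrD -!natr1.
field; rewrite ?gt_eqF ?pos ?f0 //; lra.
Qed.

Lemma prod_one_minus_bounds {R : realFieldType} (m : nat) (x : nat -> R) :
  (forall i, 0 <= x i <= 1) ->
  1 - \sum_(i < m) x i <= \prod_(i < m) (1 - x i) <= 1.
Proof.
move=> x01; elim: m => [|m IH]; first by rewrite !big_ord0 subr0 lexx.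
rewrite !big_ord_recr /=.
have /andP[xm0 xm1] := x01 m.
have S0 : 0 <= \sum_(i < m) x i by apply: sumr_ge0 => i _; case/andP: (x01 i).
have P0 : 0 <= \prod_(i < m) (1 - x i).
  by apply: prodr_ge0 => i _; case/andP: (x01 i) => _; rewrite subr_ge0.
by case/andP: IH => IH1 IH2; apply/andP; split; nra.
Qed.

(* The middle factor of sbIP_factor lies in [1 - M/L, 1], as d/(dL+i) <= 1/L. *)
Lemma shift_product_bounds {R : realFieldType} (d L : R) (M : nat) :
  0 < d -> 1 <= L ->
  1 - M%:R / L <= \prod_(i < M) (1 - d / (d * L + i%:R)) <= 1.
Proof.
move=> d0 L1.
have DiP i : 0 < d * L + i%:R by rewrite ltr_wpDr // mulr_gt0 //; lra.
have x_le i : d / (d * L + i%:R) <= L^-1.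
  rewrite ler_pdivrMr // mulrDr (mulrC d) mulrA mulVf ?mul1r ?lerDl //.
    by rewrite mulr_ge0 // invr_ge0; lra.
  by rewrite gt_eqF //; lra.
have x01 i : 0 <= d / (d * L + i%:R) <= 1.
  rewrite divr_ge0 ?(ltW d0) ?(ltW (DiP i)) //= (le_trans (x_le i)) //.
  by rewrite invf_le1 //; lra.
have /andP[lo hi] := prod_one_minus_bounds M _ x01.
rewrite hi andbT (le_trans _ lo) // lerD2l lerN2.
apply: (@le_trans _ _ (\sum_(i < M) L^-1)); first by apply: ler_sum => i _.
by rewrite sumr_const card_ord mulr_natl.
Qed.

Lemma cvg_rising {R : realType} {x : nat -> R} {a : R} (n : nat) :
  x @ \oo --> a -> (fun k => rising (x k) n) @ \oo --> rising a n.
Proof.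
move=> xa; apply: cvg_big => //; first exact: mul_continuous.
by move=> i _; apply: cvgD xa (cvg_cst _).
Qed.

Lemma cvg_rising_fact {R : realType} {x : nat -> R} (n : nat) :
  x @ \oo --> 0 -> (fun k => rising (x k + 1) n / (n`!)%:R) @ \oo --> (1 : R).
Proof.
move=> x0.
have rising_lim : (fun k => rising (x k + 1) n) @ \oo --> ((n`!)%:R : R).
  rewrite -rising1 -[X in _ --> rising X _]add0r.
  exact: cvg_rising n (cvgD x0 (cvg_cst _)).
have fact_neq0 : (n`!)%:R != 0 :> R by rewrite pnatr_eq0 -lt0n fact_gt0.
by rewrite -[X in _ --> X](divff fact_neq0); apply: cvgMr_tmp.
Qed.

Lemma cvg_div_oo {R : realType} {S : nat -> R} (c : R) :
  S @ \oo --> +oo -> (fun k => c / S k) @ \oo --> 0.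
Proof.
move=> S_oo; rewrite -(mulr0 c); apply: cvgMl_tmp.
by apply/gtr0_cvgV0 => //; move/cvgryPgt: S_oo; apply.
Qed.

Lemma cvg_subn_ratio {R : realType} {N : nat -> nat} {S : nat -> R} {l : R} (c : nat) :
  (fun k => (N k)%:R : R) @ \oo --> +oo -> S @ \oo --> +oo ->
  (fun k => (N k)%:R / S k) @ \oo --> l ->
  (fun k => (N k - c)%:R / S k) @ \oo --> l.
Proof.
move=> N_oo S_oo NS_l; rewrite -[l]subr0.
apply: cvg_trans (near_eq_cvg _) _; last exact: cvgB NS_l (cvg_div_oo c%:R S_oo).
near=> k; rewrite /= natrB ?mulrBl //.
by rewrite -(ler_nat R); near: k; move/cvgryPge: N_oo; apply.
Unshelve. all: by end_near. Qed.

Lemma cvg_shift_product {R : realType} {d L : nat -> R} {M : nat -> nat} :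
  (forall k, 0 < d k) -> L @ \oo --> +oo ->
  (fun k => (M k)%:R / L k) @ \oo --> 0 ->
  (fun k => \prod_(i < M k) (1 - d k / (d k * L k + i%:R))) @ \oo --> (1 : R).
Proof.
move=> d_gt0 L_oo ML_0.
apply: (@squeeze_cvgr _ _ _ _ (fun k => 1 - (M k)%:R / L k) (fun=> 1)).
- near=> k; apply: shift_product_bounds => //.
  by near: k; move/cvgryPge: L_oo; apply.
- by rewrite -[X in _ --> X]subr0; apply: cvgB (cvg_cst _) ML_0.
- exact: cvg_cst.
Unshelve. all: by end_near. Qed.

Section AffineRatio.
Context {R : realType} {D Nn : nat -> R} {gamma : R}.
Hypothesis D_oo : D @ \oo --> +oo.
Hypothesis ratio_gamma : (fun k => Nn k / D k) @ \oo --> gamma.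

Let D_neq0 : \forall k \near \oo, D k != 0.
Proof. by move/cvgryPgt: D_oo => /(_ 0); apply: filterS => k; rewrite lt0r => /andP[]. Qed.

Lemma cvg_affine_over (u v a : R) :
  (fun k => (u * D k + v * Nn k + a) / D k) @ \oo --> u + v * gamma.
Proof.
rewrite -[u + _]addr0.
apply: cvg_trans (near_eq_cvg _) _; last first.
  exact: cvgD (cvgD (cvg_cst u) (cvgMl_tmp (a := v) ratio_gamma)) (cvg_div_oo a D_oo).
near=> k; have Dk : D k != 0 by near: k; exact: D_neq0.
by rewrite /= !mulrDl mulfK // -mulrA.
Unshelve. all: by end_near. Qed.

Lemma cvg_affine_ratio (u v a b : R) : 0 <= gamma ->
  (fun k => (u * D k + v * Nn k + a) / (D k + Nn k + b)) @ \oo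
    --> (u + v * gamma) / (1 + gamma).
Proof.
move=> gamma0; have g1 : 1 + gamma != 0 by rewrite gt_eqF //; lra.
have den := cvg_affine_over 1 1 b; rewrite mul1r in den.
apply: cvg_trans (near_eq_cvg _) _; last exact: cvgM (cvg_affine_over u v a) (cvgV g1 den).
near=> k; have Dk : D k != 0 by near: k; exact: D_neq0.
by rewrite /= !mul1r invf_div mulrA divfK.
Unshelve. all: by end_near. Qed.

End AffineRatio.

Theorem lemma4p1 (R : realType) (L N : nat -> nat) (d : nat -> R) (gamma : R) :
  (forall k, 0 < d k) ->
  (fun k => (L k)%:R : R) @ \oo --> +oo ->
  (fun k => (N k)%:R : R) @ \oo --> +oo ->
  (fun k => (N k)%:R / (L k)%:R : R) @ \oo --> 0 ->
  d @ \oo --> 0 ->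
  (fun k => d k * (L k)%:R) @ \oo --> +oo ->
  0 <= gamma ->
  (fun k => (N k)%:R / (d k * (L k)%:R)) @ \oo --> gamma ->
  forall n : nat, (0 < n)%N ->
    (fun k => sbIP (d k) (L k) (N k) n) @ \oo
      --> gamma ^+ n.-1 / (1 + gamma) ^+ n.
Proof.
move=> d_gt0 L_oo N_oo NL_0 d_0 D_oo gamma_ge0 ND_gamma [//|n] _.
pose M k := (N k - n.+1)%N.
have MD_gamma := cvg_subn_ratio n.+1 N_oo D_oo ND_gamma.
have -> : gamma ^+ n.+1.-1 / (1 + gamma) ^+ n.+1
    = 1 / (1 + gamma) * 1 * 1 * \prod_(i < n) (gamma / (1 + gamma)).
  rewrite prodr_const card_ord /= expr_div_n exprS; field.
  by rewrite expf_neq0 // gt_eqF //; lra.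
apply: cvg_trans (near_eq_cvg _) _.
  near=> k; have -> : N k = (M k + n.+1)%N.
    by rewrite subnK // -(ler_nat R); near: k; move/cvgryPge: N_oo; apply.
  rewrite sbIP_factor // -(ltr_nat R) (lt_le_trans ltr01) //.
  by near: k; move/cvgryPge: L_oo; apply.
apply: cvgM; [apply: cvgM; [apply: cvgM|]|].
- have := cvg_affine_ratio D_oo MD_gamma 1 0 0 n%:R gamma_ge0.
  by rewrite mul0r !addr0 mul1r; under eq_cvg do rewrite mul1r mul0r !addr0.
- exact: cvg_rising_fact.
- exact: (@cvg_shift_product _ d (fun k => (L k)%:R) M d_gt0 L_oo
    (cvg_subn_ratio n.+1 N_oo L_oo NL_0)).
- apply: cvg_big => //; first exact: mul_continuous.
  move=> i _; have := cvg_affine_ratio D_oo MD_gamma 0 1 (i%:R + 1) i%:R gamma_ge0.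
  by rewrite add0r mul1r; under eq_cvg do rewrite mul0r add0r mul1r.
Unshelve. all: by end_near. Qed.
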